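(* Let $V$ be a real vector space of odd finite dimension, $G\le\mathrm{GL}(V)$ a finite group such that $V$ is a non-trivial irreducible $\mathbb{R}G$-module and $-\mathrm{id}_V\notin G$, and let $n\in N_{\mathrm{GL}(V)}(G)$ have finite order, with $\nu=\mathrm{ad}_n\in\mathrm{Aut}(G)$ the automorphism $y\mapsto nyn^{-1}$. Suppose there is $g\in G$ such that $\mathrm{ad}_g\circ\nu$ has order $2$ in $\mathrm{Aut}(G)$. Then there is $h\in G$ such that $hn$ has eigenvalue $1$, i.e. $(G,V,n)$ has the $E1$-property.
   Context: For $x\in N_{\mathrm{GL}(V)}(G)$, $\mathrm{ad}_x\in\mathrm{Aut}(G)$ denotes conjugation $y\mapsto xyx^{-1}$. *)

From HB Require Import structures.
From mathcomp Require Import all_boot all_order all_algebra.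
From mathcomp Require Import reals.
Set Implicit Arguments. Unset Strict Implicit. Unset Printing Implicit Defensive.
Import GRing.Theory Num.Theory.
Local Open Scope ring_scope.

(* GL(V) for V = R^d (d = m.+1) is represented by the invertible d x d
   real matrices with matrix product; ^-1 is the matrix inverse. *)

Definition ad (R : comUnitRingType) (m : nat) (x y : 'M[R]_m.+1) : 'M[R]_m.+1 :=
  x * y * x^-1.

Definition is_finite_matrix_group (R : comUnitRingType) (m : nat)
  (G : seq 'M[R]_m.+1) : Prop :=
  [/\ 1 \in G,
      (forall g, g \in G -> g \in unitmx),
      (forall g h, g \in G -> h \in G -> g * h \in G) &
      (forall g, g \in G -> g^-1 \in G)].

(* V is an irreducible RG-module: the only G-invariant subspaces are 0 and V
   (subspaces = row spaces of square matrices, G acting on row vectors). *)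
Definition irreducible_module (R : fieldType) (m : nat) (G : seq 'M[R]_m.+1) : Prop :=
  forall U : 'M[R]_m.+1, (forall g, g \in G -> stablemx U g) ->
    \rank U = 0%N \/ row_full U.

Definition nontrivial_module (R : ringType) (m : nat) (G : seq 'M[R]_m.+1) : Prop :=
  exists2 g, g \in G & g != 1.

Definition in_normalizer (R : comUnitRingType) (m : nat) (G : seq 'M[R]_m.+1)
  (x : 'M[R]_m.+1) : Prop :=
  x \in unitmx /\ (forall y, y \in G -> (ad x y \in G) /\ (ad x^-1 y \in G)).

Definition order2_on (R : ringType) (m : nat) (G : seq 'M[R]_m.+1)
  (phi : 'M[R]_m.+1 -> 'M[R]_m.+1) : Prop :=
  (exists2 y, y \in G & phi y != y) /\ (forall y, y \in G -> phi (phi y) = y).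

From HB Require Import structures.
From mathcomp Require Import all_boot all_order all_algebra.
From mathcomp Require Import reals polyrcf.
Import GRing.Theory Num.Theory.
Local Open Scope ring_scope.

(* Put x := g n, so that ad_g o nu = ad_x.  Since ad_x is an involution of G,
   x^2 centralizes G.  In odd dimension x^2 has a real eigenvalue mu, and by
   Schur's lemma x^2 = mu.  As n has finite order k, x^(2k) = mu^k lies in G,
   so |mu| = 1 by finiteness of G; comparing determinants, det(x)^2 = mu^dim
   with dim odd forces mu = 1.  Thus x^2 = 1 and x <> -1 (ad_x is not the
   identity), so x - 1 is singular: x = g n has eigenvalue 1. *)

Section MatrixGroup.

Context {R : comUnitRingType} {m : nat}.
Implicit Types x y z : 'M[R]_m.+1.

Lemma adM x y z :
  x \is a GRing.unit -> y \is a GRing.unit -> ad x (ad y z) = ad (x * y) z.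
Proof. by move=> xu yu; rewrite /ad invrM // !mulrA. Qed.

Lemma adN1 z : ad (- 1) z = z.
Proof. by rewrite /ad invrN1 mulrN1 mulNr mul1r opprK. Qed.

Lemma ad_involutive_comm x z :
  x \is a GRing.unit -> ad x (ad x z) = z -> GRing.comm (x ^+ 2) z.
Proof.
move=> xu adx2z; rewrite /GRing.comm -{2}adx2z /ad expr2.
by rewrite -!mulrA mulKr // mulVr // mulr1 !mulrA.
Qed.

Context {G : seq 'M[R]_m.+1}.
Hypothesis groupG : is_finite_matrix_group G.

Lemma in_normalizer_mulr_exp {n g} :
  in_normalizer G n -> g \in G ->
  forall j, exists2 h, h \in G & (g * n) ^+ j = h * n ^+ j.
Proof.
case: groupG => G1 _ GM _ [nu nG] gG.
elim=> [|j [h hG IH]]; first by exists 1; rewrite ?expr0 ?mulr1.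
exists (g * ad n h); first by apply: GM => //; case: (nG h hG).
by rewrite exprS IH /ad exprS -!mulrA; congr (_ * _); rewrite !mulrA mulrVK.
Qed.

Lemma finite_matrix_group_exp_eq1 {x} :
  x \in G -> exists2 j, (0 < j)%N & x ^+ j = 1.
Proof.
case: groupG => G1 Gu GM _ xG.
have powG i : x ^+ i \in G.
  by elim: i => [|i IH]; rewrite ?expr0 // exprS GM.
set s := [seq x ^+ i | i <- iota 0 (size G).+1].
have /(uniqPn 0) [i [j [lt_ij lt_js]]] : ~~ uniq s.
  apply/negP => uniq_s.
  have sG : {subset s <= G} by move=> _ /mapP[i _ ->].
  by have := uniq_leq_size uniq_s sG; rewrite size_map size_iota ltnn.
rewrite size_map size_iota in lt_js.
rewrite !(nth_map 0%N) ?size_iota ?(ltn_trans lt_ij) //.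
rewrite !nth_iota ?(ltn_trans lt_ij) // !add0n => xij.
exists (j - i)%N; first by rewrite subn_gt0.
apply: (mulrI (unitrX i (Gu x xG))).
by rewrite -exprD subnKC ?(ltnW lt_ij) // mulr1.
Qed.

End MatrixGroup.

Lemma scalar_mx_exp_eq1_norm {R : numDomainType} {m j : nat} {c : R} :
  (0 < j)%N -> (c%:M : 'M[R]_m.+1) ^+ j = 1 -> `|c| = 1.
Proof.
move=> j_gt0; rewrite -rmorphXn /= => /(congr1 (fun M : 'M_m.+1 => M 0 0)).
rewrite !mxE eqxx /= => /(congr1 Num.norm); rewrite normrX normr1 => /eqP.
by rewrite pexpr_eq1 // => /eqP.
Qed.

Lemma odd_dim_sqr_scalar_ge0 {R : realDomainType} {m : nat} {x : 'M[R]_m.+1} {a : R} :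
  odd m.+1 -> x ^+ 2 = a%:M -> 0 <= a.
Proof.
move=> oddV x2E; rewrite -(exprn_odd_ge0 a oddV) -det_scalar -x2E.
by rewrite expr2 detM -expr2 sqr_ge0.
Qed.

Lemma odd_dim_eigenvalue {R : rcfType} {m : nat} (A : 'M[R]_m.+1) :
  odd m.+1 -> exists a, eigenvalue A a.
Proof.
move=> oddV; have [|a Aa] := @odd_poly_root _ (char_poly A).
  by rewrite size_char_poly /= negbK.
by exists a; rewrite eigenvalue_root_char.
Qed.

Lemma irreducible_centralizing_scalar {F : fieldType} {m : nat}
    {G : seq 'M[F]_m.+1} (A : 'M_m.+1) a :
  irreducible_module G -> (forall z, z \in G -> GRing.comm A z) ->
  eigenvalue A a -> A = a%:M.
Proof.
move=> irrG cAG Aa.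
have stableG z : z \in G -> stablemx (eigenspace A a) z.
  move=> zG; rewrite sub_kermx -mulmxA.
  have -> : z *m (A - a%:M) = (A - a%:M) *m z.
    by rewrite mulmxBr mulmxBl scalar_mxC -[z *m A]/(z * A) -(cAG z zG).
  by rewrite mulmxA mulmx_ker mul0mx.
have [/eqP|] := irrG _ stableG.
  by rewrite mxrank_eq0 => /eqP A0; rewrite /eigenvalue A0 eqxx in Aa.
by rewrite -sub1mx sub_kermx mul1mx subr_eq0 => /eqP.
Qed.

Lemma involution_eigenvalue1 {F : fieldType} {m : nat} (x : 'M[F]_m.+1) :
  x ^+ 2 = 1 -> x != - 1 -> eigenvalue x 1.
Proof.
move=> x2 xN1; apply: contra xN1 => /eqP ker0.
have : ((x + 1)%R <= eigenspace x 1)%MS.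
  rewrite sub_kermx; apply/eqP.
  rewrite -[_ *m _]/((x + 1) * (x - 1)) mulrDl mul1r mulrBr mulr1 -expr2 x2.
  by rewrite addrA subrK subrr.
by rewrite ker0 submx0 addr_eq0.
Qed.

Theorem corollary4 (R : realType) (m : nat) (G : seq 'M[R]_m.+1) (n : 'M[R]_m.+1) :
  odd m.+1 ->
  is_finite_matrix_group G ->
  irreducible_module G ->
  nontrivial_module G ->
  (- 1) \notin G ->
  in_normalizer G n ->
  (exists2 k : nat, (0 < k)%N & n ^+ k = 1) ->
  (exists2 g, g \in G & order2_on G (fun y => ad g (ad n y))) ->
  exists2 h, h \in G & eigenvalue (h * n) 1.
Proof.
move=> oddV groupG irrG _ _ nG [k k_gt0 nk] [g gG [[y yG adxy] adx2]].
have [_ Gu _ _] := groupG; have [nu _] := nG.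
have xu : g * n \is a GRing.unit by rewrite unitrMl //; apply: Gu.
have adE z : ad g (ad n z) = ad (g * n) z by rewrite adM //; apply: Gu.
have [mu x2mu] := odd_dim_eigenvalue ((g * n) ^+ 2) oddV.
have x2E : (g * n) ^+ 2 = mu%:M.
  apply: irreducible_centralizing_scalar irrG _ x2mu => z zG.
  by apply: ad_involutive_comm; rewrite // -!adE adx2.
have [h hG] := in_normalizer_mulr_exp groupG nG gG (2 * k).
rewrite exprM x2E -(mulnC k) exprM nk expr1n mulr1 -rmorphXn /= => mukE.
have /(finite_matrix_group_exp_eq1 groupG) [j j_gt0] : (mu ^+ k)%:M \in G.
  by rewrite mukE.
move=> /(scalar_mx_exp_eq1_norm j_gt0) /eqP.
have mu_ge0 := odd_dim_sqr_scalar_ge0 oddV x2E.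
rewrite normrX pexpr_eq1 // ger0_norm //.
move=> /eqP mu1; exists g => //; apply: involution_eigenvalue1; first by rewrite x2E mu1.
by apply: contraNneq adxy => xN1; rewrite adE xN1 adN1.
Qed.
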